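(* Let $(V,E)$ be a finite graph with $E\neq\emptyset$ and let $p\in(0,1)$. Let $(\eta_t,\sigma_t)_{t\ge0}$ be a continuous-time Markov jump process on $\{0,1\}^E\times\{-1,1\}^V$ which updates at most one site or one edge at each time (i.e. its rates $q((\eta,\sigma),(\eta',\sigma'))$ vanish unless $(\eta',\sigma')$ differs from $(\eta,\sigma)$ in at most one spin or at most one edge), and whose spin marginal $(\sigma_t)_{t\ge0}$ is a Markov jump process with transition rates $c(\sigma,\sigma')$ satisfying: $c(\sigma,\sigma')=0$ whenever $\sigma,\sigma'$ differ at two or more vertices, $c(\sigma,\sigma^x)>0$ for all $x\in V$, and $c(\sigma,\sigma)=-\sum_{y\in V}c(\sigma,\sigma^y)$. Then $(\eta_t,\sigma_t)_{t\ge0}$ cannot be reversible with respect to $IP$.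
   Context: Edge configurations $\eta\in\{0,1\}^E$, spin configurations $\sigma\in\{-1,1\}^V$. For $e=\langle x,y\rangle$, $\delta_\sigma(e)=\mathbf 1_{\sigma(x)=\sigma(y)}$. $IP(\eta,\sigma)=\frac1Z\prod_{e\in E}\big(p\mathbf 1_{\eta(e)=1}\delta_\sigma(e)+(1-p)\mathbf 1_{\eta(e)=0}\big)$ with $Z$ the normalizing constant. $\sigma^x$ is $\sigma$ with the spin at $x$ flipped. Reversibility with respect to $IP$ means $IP(a)q(a,b)=IP(b)q(b,a)$ for all states $a,b$. The spin marginal is a Markov jump process with rates $c$ if it is a time-homogeneous Markov process for every initial distribution, with rates $c$ not depending on the initial distribution. *)

From HB Require Import structures.
From mathcomp Require Import all_boot all_order all_algebra.
From mathcomp Require Import all_classical all_reals all_analysis.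

Set Implicit Arguments.
Unset Strict Implicit.
Unset Printing Implicit Defensive.
Import Order.TTheory GRing.Theory Num.Theory.
Import numFieldNormedType.Exports.
Local Open Scope ring_scope.

Section Defs.
Variable R : realType.

Definition rate_matrix (T : finType) (q : T -> T -> R) : Prop :=
  (forall a b, a != b -> 0 <= q a b) /\
  (forall a, q a a = - \sum_(b | b != a) q a b).

Fixpoint qpow (T : finType) (q : T -> T -> R) (k : nat) : T -> T -> R :=
  match k with
  | 0 => fun a b => (a == b)%:R
  | k'.+1 => fun a b => \sum_(c : T) qpow q k' a c * q c b
  end.

Definition semigroup (T : finType) (q : T -> T -> R) (t : R) (a b : T) : R :=
  limn (series (fun k : nat => t ^+ k / (k`!)%:R * qpow q k a b)).

Definition distribution (T : finType) (mu : T -> R) : Prop :=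
  (forall a, 0 <= mu a) /\ \sum_(a : T) mu a = 1.

(* Given a Markov jump process X with rates q started at state a at time 0,
   and a function f : T -> U of the state, [obs_fdd q f a L] with
   L = [:: (d_1,u_1); ...; (d_n,u_n)] is the probability that
   f(X_{t_i}) = u_i for all i, where t_i = d_1 + ... + d_i. *)
Fixpoint obs_fdd (T U : finType) (q : T -> T -> R) (f : T -> U) (a : T)
    (L : seq (R * U)) : R :=
  match L with
  | [::] => 1
  | (d, u) :: L' => \sum_(b | f b == u) semigroup q d a b * obs_fdd q f b L'
  end.

Definition fdd (U : finType) (c : U -> U -> R) (s : U) (L : seq (R * U)) : R :=
  obs_fdd c id s L.

(* "f(X) is a time-homogeneous Markov jump process with rates c, for every
   initial distribution of X, with c independent of the initial distribution":
   for every initial law mu of X_0, all times 0 = t_0 <= t_1 <= ... <= t_n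
   (given through their nonnegative increments d_i) and values u_0,...,u_n,
   P_mu(f(X_0)=u_0, f(X_{t_1})=u_1, ..., f(X_{t_n})=u_n)
     = P_mu(f(X_0)=u_0) * prod_i P^c_{d_i}(u_{i-1},u_i). *)
Definition marginal_markov_with_rates (T U : finType) (q : T -> T -> R)
    (f : T -> U) (c : U -> U -> R) : Prop :=
  forall mu : T -> R, distribution mu ->
  forall (u0 : U) (L : seq (R * U)), all (fun x => 0 <= x.1) L ->
    \sum_(a | f a == u0) mu a * obs_fdd q f a L
    = (\sum_(a | f a == u0) mu a) * fdd c u0 L.

Definition reversible (T : finType) (pi : T -> R) (q : T -> T -> R) : Prop :=
  forall a b, pi a * q a b = pi b * q b a.

Definition simple_graph (V E : finType) (src dst : E -> V) : Prop :=
  (forall e, src e != dst e) /\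
  (forall e e', ((src e == src e') && (dst e == dst e')) ||
                ((src e == dst e') && (dst e == src e')) -> e = e').

(* Spins are encoded by bool: true = +1, false = -1.
   Edge variables: true = 1 (open), false = 0 (closed). *)
Definition state (V E : finType) : finType :=
  ({ffun E -> bool} * {ffun V -> bool})%type.

Definition delta (V E : finType) (src dst : E -> V) (sigma : {ffun V -> bool})
    (e : E) : bool := sigma (src e) == sigma (dst e).

Definition ES_weight (V E : finType) (src dst : E -> V) (p : R)
    (st : state V E) : R :=
  \prod_(e : E)
     (p * ((st.1 e) && delta src dst st.2 e)%:R + (1 - p) * (~~ st.1 e)%:R).

Definition IP (V E : finType) (src dst : E -> V) (p : R) (st : state V E) : R :=
  ES_weight src dst p st / \sum_(st' : state V E) ES_weight src dst p st'.

Definition flip (V : finType) (sigma : {ffun V -> bool}) (x : V)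
  : {ffun V -> bool} := [ffun y => if y == x then ~~ sigma y else sigma y].

Definition ndiff (I : finType) (f g : {ffun I -> bool}) : nat :=
  #|[set i | f i != g i]|.

Definition single_update (V E : finType) (q : state V E -> state V E -> R)
  : Prop :=
  forall a b : state V E,
    ~ ((a.1 = b.1 /\ (ndiff a.2 b.2 <= 1)%N) \/
       (a.2 = b.2 /\ (ndiff a.1 b.1 <= 1)%N)) ->
    q a b = 0.

End Defs.

From Pilot Require Import Defs.
From HB Require Import structures.
From mathcomp Require Import all_boot all_order all_algebra.
From mathcomp Require Import all_classical all_reals all_analysis.
From mathcomp Require Import ring lra.

Set Implicit Arguments.
Unset Strict Implicit.
Unset Printing Implicit Defensive.

Import Order.TTheory GRing.Theory Num.Theory.
Import numFieldNormedType.Exports.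
Local Open Scope ring_scope.

(* Let a be the state with every edge open and every spin +1, and u the spin
   configuration obtained by flipping one endpoint of an edge e.  A state with
   spins u and the edges of a has IP-mass 0 (the open edge e has disagreeing
   endpoints), and any other state with spins u differs from a both in an edge
   and in a spin; so reversibility and locality force q(a, b) = 0 whenever
   b has spins u.  On the other hand, expanding P_t = I + t Q + O(t^2) both for
   the joint process started at a and for the spin process shows that the spin
   rate c(a.2, u) is the sum of the rates q(a, b) over the states b with spins
   u.  Hence c(a.2, u) = 0, contradicting c(s, s^x) > 0. *)

Lemma geometric_tail_le {R : realFieldType} n (r : R) :
  0 <= r -> r < 1 -> \sum_(2 <= k < 2 + n) r ^+ k <= r ^+ 2 / (1 - r).
Proof.
move=> r0 r1; rewrite geometric_partial_tail geometric_seriesE ?lt_eqF //=.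
rewrite ler_pM2r ?invr_gt0 ?subr_gt0 // ler_piMr ?exprn_ge0 //.
by rewrite gerBl exprn_ge0.
Qed.

Section SemigroupExpansion.
Variables (R : realType) (T : finType) (q : T -> T -> R).

Definition qbound : R := 1 + \sum_(a : T) \sum_(b : T) `|q a b|.

Lemma qbound_gt0 : 0 < qbound.
Proof.
by apply: lt_le_trans ltr01 _; rewrite lerDl; do 2![apply: sumr_ge0 => ? _].
Qed.

Lemma sum_norm_col_le_qbound b : \sum_(c : T) `|q c b| <= qbound.
Proof.
apply: le_trans (_ : \sum_(c : T) \sum_(b' : T) `|q c b'| <= _); last first.
  by rewrite lerDr.
by apply: ler_sum => c _; rewrite (bigD1 b) //= lerDl sumr_ge0.
Qed.

Lemma norm_qpow_le k a b : `|qpow q k a b| <= qbound ^+ k.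
Proof.
elim: k b => [|k IH] b /=.
  by rewrite expr0; case: (a == b); rewrite ?normr1 ?normr0.
apply: le_trans (ler_norm_sum _ _ _) _.
apply: le_trans (_ : \sum_c qbound ^+ k * `|q c b| <= _).
  by apply: ler_sum => c _; rewrite normrM ler_wpM2r.
rewrite -mulr_sumr exprSr ler_wpM2l ?sum_norm_col_le_qbound //.
by rewrite exprn_ge0 // ltW // qbound_gt0.
Qed.

Variables (t : R) (a b : T).
Hypothesis t_ge0 : 0 <= t.

Let u (k : nat) : R := t ^+ k / (k`!)%:R * qpow q k a b.

Lemma norm_semigroup_term_le k : `|u k| <= (t * qbound) ^+ k.
Proof.
rewrite /u normrM ger0_norm ?divr_ge0 ?exprn_ge0 // exprMn.
rewrite ler_pM ?divr_ge0 ?exprn_ge0 ?norm_qpow_le //.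
by rewrite ler_pdivrMr ?ltr0n ?fact_gt0 // ler_peMr ?exprn_ge0 // ler1n fact_gt0.
Qed.

Hypothesis t_small : t * qbound < 1.

Lemma is_cvg_semigroup_series : cvgn (series u).
Proof.
apply/normed_cvg/(@series_le_cvg _ _ (geometric 1 (t * qbound))) => [n|n|n /=|].
- exact: normr_ge0.
- by rewrite geometric_ge0 // mulr_ge0 // ltW // qbound_gt0.
- by rewrite mul1r norm_semigroup_term_le.
apply: is_cvg_geometric_series.
by rewrite ger0_norm // mulr_ge0 // ltW // qbound_gt0.
Qed.

Lemma semigroup_partial_sum_expansion n :
  `|series u n.+2 - ((a == b)%:R + t * q a b)|
    <= (t * qbound) ^+ 2 / (1 - t * qbound).
Proof.
have u0 : u 0 = (a == b)%:R by rewrite /u expr0 div1r invr1 mul1r.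
have u1 : u 1 = t * q a b.
  rewrite /u expr1 divr1 /=; congr (_ * _).
  rewrite (bigD1 a) //= eqxx mul1r big1 ?addr0 // => c /negbTE.
  by rewrite eq_sym => ->; rewrite mul0r.
rewrite /series /= big_ltn // big_ltn // u0 u1 addrA.
rewrite [_ + \sum_(_ <= _ < _) _]addrC addrK.
apply: le_trans (ler_norm_sum _ _ _) _.
apply: le_trans _ (geometric_tail_le n (mulr_ge0 t_ge0 (ltW qbound_gt0)) t_small).
by rewrite add2n; apply: ler_sum => k _; exact: norm_semigroup_term_le.
Qed.

Lemma semigroup_expansion :
  `|semigroup q t a b - ((a == b)%:R + t * q a b)|
    <= (t * qbound) ^+ 2 / (1 - t * qbound).
Proof.
have near_partial : \forall n \near \oo%classic,
    `|series u n - ((a == b)%:R + t * q a b)|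
      <= (t * qbound) ^+ 2 / (1 - t * qbound).
  exists 2%N => // n /= /subnK <-.
  by rewrite addn2 semigroup_partial_sum_expansion.
rewrite ler_distl; apply/andP; split.
  apply: limr_ge is_cvg_semigroup_series _; apply: filterS near_partial => n.
  by rewrite ler_distl => /andP[].
apply: limr_le is_cvg_semigroup_series _; apply: filterS near_partial => n.
by rewrite ler_distl => /andP[].
Qed.

End SemigroupExpansion.

Lemma semigroup_first_order (R : realType) (T : finType) (q : T -> T -> R)
    t a b :
  0 <= t -> 2 * (t * qbound q) <= 1 ->
  `|semigroup q t a b - ((a == b)%:R + t * q a b)| <= 2 * (t * qbound q) ^+ 2.
Proof.
move=> t_ge0 t_small; have r_lt1 : t * qbound q < 1.
  by have := mulr_ge0 t_ge0 (ltW (qbound_gt0 q)); lra.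
apply: le_trans (semigroup_expansion a b t_ge0 r_lt1) _.
rewrite ler_pdivrMr ?subr_gt0 // mulrAC ler_peMl ?sqr_ge0 //; lra.
Qed.

Lemma eq0_of_linear_le_quadratic (R : realFieldType) (x K t0 : R) : 0 < t0 ->
  (forall t, 0 < t -> t <= t0 -> `|t * x| <= K * t ^+ 2) -> x = 0.
Proof.
move=> t0_gt0 le_quad; apply/normr0_eq0/eqP; rewrite eq_le normr_ge0 andbT.
apply/ler_addgt0Pr => e e_gt0; rewrite add0r.
have K1_gt0 : 0 < `|K| + 1 by rewrite ltr_pwDr ?normr_ge0.
pose t := Num.min t0 (e / (`|K| + 1)).
have t_gt0 : 0 < t by rewrite lt_min t0_gt0 divr_gt0.
have t_le_t0 : t <= t0 by rewrite ge_min lexx.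
have := le_quad t t_gt0 t_le_t0.
rewrite normrM (gtr0_norm t_gt0) expr2 mulrA mulrC ler_pM2r // => x_le.
apply: le_trans x_le (le_trans (ler_wpM2r (ltW t_gt0) (ler_norm K)) _).
rewrite -(@ler_pM2r _ (`|K| + 1)) // -mulrA.
have t_le_e : t * (`|K| + 1) <= e by rewrite -ler_pdivlMr // ge_min lexx orbT.
apply: le_trans (ler_wpM2l (normr_ge0 K) t_le_e) _.
by rewrite mulrC ler_pM2l // lerDl.
Qed.

Section MarginalRate.
Variables (R : realType) (T U : finType).
Variables (q : T -> T -> R) (f : T -> U) (c : U -> U -> R).
Hypothesis q_marg : marginal_markov_with_rates q f c.

Lemma distribution_dirac (a : T) : Defs.distribution (fun b => (b == a)%:R : R).
Proof.
split=> [b|]; first exact: ler0n.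
by rewrite (bigD1 a) //= eqxx big1 ?addr0 // => b /negbTE ->.
Qed.

Lemma marginal_semigroup a u t : 0 <= t ->
  \sum_(b | f b == u) semigroup q t a b = semigroup c t (f a) u.
Proof.
move=> t_ge0; have := @q_marg _ (distribution_dirac a) (f a) [:: (t, u)].
rewrite /= t_ge0 => /(_ isT).
have dirac (F : T -> R) : \sum_(b | f b == f a) (b == a)%:R * F b = F a.
  rewrite (bigD1 a) //= eqxx mul1r big1 ?addr0 // => b /andP[_ /negbTE ->].
  by rewrite mul0r.
have mass : \sum_(b | f b == f a) (b == a)%:R = 1 :> R.
  by rewrite -[RHS](dirac (fun _ => 1)); apply: eq_bigr => b _; rewrite mulr1.
rewrite dirac mass mul1r /fdd /= big_pred1_eq mulr1 => <-.
by apply: eq_bigr => b _; rewrite mulr1.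
Qed.

Lemma marginal_rate a u : f a != u -> \sum_(b | f b == u) q a b = c (f a) u.
Proof.
move=> fa_neq_u; apply/eqP; rewrite eq_sym -subr_eq0; apply/eqP.
pose Mq := qbound q; pose Mc := qbound c.
have M_gt0 : 0 < Mq + Mc by rewrite addr_gt0 ?qbound_gt0.
pose t0 := (2 * (Mq + Mc))^-1.
pose K := \sum_(b | f b == u) 2 * Mq ^+ 2 + 2 * Mc ^+ 2.
apply: (@eq0_of_linear_le_quadratic _ _ K t0); first by rewrite invr_gt0 mulr_gt0.
move=> t t_gt0 t_le_t0.
have t_M_le1 : t * (2 * (Mq + Mc)) <= 1.
  by rewrite -ler_pdivlMr ?mulr_gt0 // div1r.
have Mq_gt0 : 0 < Mq := qbound_gt0 q.
have Mc_gt0 : 0 < Mc := qbound_gt0 c.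
have tq_small : 2 * (t * Mq) <= 1 by nra.
have tc_small : 2 * (t * Mc) <= 1 by nra.
have marg := marginal_semigroup a u (ltW t_gt0).
have no_jumps : \sum_(b | f b == u) (a == b)%:R = 0 :> R.
  apply: big1 => b fb; suff /negbTE -> : a != b by [].
  by apply: contraNneq fa_neq_u => ->.
have -> : t * (c (f a) u - \sum_(b | f b == u) q a b) =
    \sum_(b | f b == u) (semigroup q t a b - ((a == b)%:R + t * q a b))
    - (semigroup c t (f a) u - ((f a == u)%:R + t * c (f a) u)).
  rewrite sumrB marg big_split /= no_jumps (negbTE fa_neq_u) !add0r -mulr_sumr.
  ring.
have sq (M : R) : 2 * (t * M) ^+ 2 = 2 * M ^+ 2 * t ^+ 2 by rewrite exprMn; ring.
rewrite mulrDl mulr_suml; apply: le_trans (ler_normB _ _) (lerD _ _).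
  apply: le_trans (ler_norm_sum _ _ _) _; apply: ler_sum => b _.
  by rewrite -sq; exact: semigroup_first_order (ltW t_gt0) tq_small.
by rewrite -sq; exact: semigroup_first_order (ltW t_gt0) tc_small.
Qed.

End MarginalRate.

Lemma reversible_rate_eq0 (R : realType) (T : finType) (pi : T -> R)
    (q : T -> T -> R) a b :
  reversible pi q -> 0 < pi a -> pi b = 0 -> q a b = 0.
Proof.
move=> rev pia_gt0 pib0; have /eqP := rev a b.
by rewrite pib0 mul0r mulf_eq0 (gt_eqF pia_gt0) => /eqP.
Qed.

Lemma single_update_eq0 (R : realType) (V E : finType)
    (q : state V E -> state V E -> R) a b :
  single_update q -> a.1 != b.1 -> a.2 != b.2 -> q a b = 0.
Proof.
by move=> loc /eqP neq1 /eqP neq2; apply: loc => -[[/neq1]|[/neq2]].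
Qed.

Lemma flip_neq (V : finType) (s : {ffun V -> bool}) x : flip s x != s.
Proof. by apply/eqP => /ffunP/(_ x); rewrite ffunE eqxx; case: (s x). Qed.

Section EdwardsSokal.
Variables (R : realType) (V E : finType) (src dst : E -> V) (p : R).

Lemma ES_weight_ge0 (st : state V E) :
  0 <= p -> p <= 1 -> 0 <= ES_weight src dst p st.
Proof.
move=> p_ge0 p_le1; apply: prodr_ge0 => e _.
by rewrite addr_ge0 // mulr_ge0 ?subr_ge0.
Qed.

Lemma ES_weight_open_const (b : bool) :
  ES_weight src dst p ([ffun=> true], [ffun=> b]) = p ^+ #|E|.
Proof.
rewrite -prodr_const; apply: eq_bigr => e _.
by rewrite /delta !ffunE eqxx mulr1 mulr0 addr0.
Qed.

Lemma ES_weight_eq0 (st : state V E) e :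
  st.1 e -> ~~ delta src dst st.2 e -> ES_weight src dst p st = 0.
Proof.
move=> open disagree; rewrite /ES_weight (bigD1 e) //= open (negbTE disagree) /=.
by rewrite mulr0 mulr0 addr0 mul0r.
Qed.

Lemma IP_gt0 (st : state V E) : 0 <= p -> p <= 1 ->
  0 < ES_weight src dst p st -> 0 < IP src dst p st.
Proof.
move=> p_ge0 p_le1 w_gt0; rewrite divr_gt0 //; apply: lt_le_trans w_gt0 _.
by rewrite (bigD1 st) //= lerDl sumr_ge0 // => st' _; exact: ES_weight_ge0.
Qed.

Lemma IP_eq0 (st : state V E) e :
  st.1 e -> ~~ delta src dst st.2 e -> IP src dst p st = 0.
Proof.
by move=> open disagree; rewrite /IP (ES_weight_eq0 open disagree) mul0r.
Qed.

End EdwardsSokal.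

Theorem theorem2 (R : realType) (V E : finType) (src dst : E -> V)
  (hG : simple_graph src dst) (hE : (0 < #|E|)%N)
  (p : R) (hp0 : 0 < p) (hp1 : p < 1)
  (q : state V E -> state V E -> R) (hq : rate_matrix q)
  (hloc : single_update q)
  (c : {ffun V -> bool} -> {ffun V -> bool} -> R)
  (hc2 : forall s s', (2 <= ndiff s s')%N -> c s s' = 0)
  (hcpos : forall s x, 0 < c s (flip s x))
  (hcdiag : forall s, c s s = - \sum_(y : V) c s (flip s y))
  (hmarg : marginal_markov_with_rates q (fun st : state V E => st.2) c) :
  ~ reversible (IP src dst p) q.
Proof.
move=> hrev; have [e _] := card_gt0P hE.
pose a : state V E := ([ffun=> true], [ffun=> true]).
pose u := flip a.2 (src e).
have IPa : 0 < IP src dst p a.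
  by rewrite IP_gt0 ?ltW // ES_weight_open_const exprn_gt0.
have no_rate_to_u b : b.2 == u -> q a b = 0.
  move=> /eqP b2; have [a1b1|] := eqVneq a.1 b.1; last first.
    by move/single_update_eq0; apply=> //; rewrite b2 eq_sym flip_neq.
  apply: (reversible_rate_eq0 hrev IPa); apply: (IP_eq0 _ (e := e)).
    by rewrite -a1b1 ffunE.
  by rewrite /delta b2 !ffunE eqxx [dst e == _]eq_sym (negbTE (hG.1 e)).
have a2_neq_u : a.2 != u by rewrite eq_sym flip_neq.
have := marginal_rate hmarg a2_neq_u; rewrite big1 // => no_spin_rate.
by have := hcpos a.2 (src e); rewrite -no_spin_rate ltxx.
Qed.
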